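(* Let $m\ge3$, let $(f,\Gamma)$ be an elliptic data for conformal metrics and let $c\le0$ be a constant. Then there is no conformal metric $g=e^{2\rho}g_0$ on $\overline{\mathbb{S}^m_+}$ with $\rho\in C^{2,\alpha}(\overline{\mathbb{S}^m_+})$ such that $$f(\lambda(g))=0\ \text{ (with }\lambda(g)\in\overline\Gamma)\ \text{in }\overline{\mathbb{S}^m_+},\qquad h(g)=c\ \text{on }\partial\mathbb{S}^m_+ .$$
   Context: $\mathbb{S}^m\subset\mathbb{R}^{m+1}$ is the unit sphere with round metric $g_0$, $\nabla$ its gradient; $\mathbb{S}^m_+=\{x_{m+1}>0\}$. For $g=e^{2\rho}g_0$, $\lambda(g)=(\lambda_1,\dots,\lambda_m)$ are the eigenvalues of $g^{-1}\mathrm{Sch}(g)$, $\mathrm{Sch}(g)=\frac{1}{m-2}\big(\mathrm{Ric}(g)-\frac{R(g)}{2(m-1)}g\big)$. Let $\Gamma_m=\{x:x_i>0\ \forall i\}$, $\Gamma_1=\{x:\sum x_i>0\}$. Elliptic data: $(f,\Gamma)$ with $\Gamma\subset\mathbb{R}^m$ an open convex symmetric cone, $\Gamma_m\subset\Gamma\subset\Gamma_1$, and $f\in C^0(\overline\Gamma)\cap C^1(\Gamma)$ symmetric, $f=0$ on $\partial\Gamma$, $f>0$ on $\Gamma$, homogeneous of degree 1, $\nabla f\in\Gamma_m$ on $\Gamma$. Mean curvature of $\partial\mathbb{S}^m_+$: $h(g)=-e^{-\rho}\langle\nabla\rho,e_{m+1}\rangle$, the normalized mean curvature with respect to $g$ and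 the unit normal $e^{-\rho}e_{m+1}$ pointing into $\mathbb{S}^m_+$ (with this convention the flat unit ball, viewed conformally on $\mathbb{S}^m_+$, has $h=1$). *)

From Stdlib Require Import Reals Lra Lia.
Open Scope R_scope.

(* Vectors are functions nat -> R; a "vector of R^n" has zero coordinates
   from index n on.  For R^{m+1}, coordinate index m plays the role of x_{m+1}. *)
Fixpoint sumn (n : nat) (F : nat -> R) : R :=
  match n with O => 0 | S k => sumn k F + F k end.

Definition vec (n : nat) (x : nat -> R) : Prop := forall k, (n <= k)%nat -> x k = 0.
Definition dot (n : nat) (x y : nat -> R) : R := sumn n (fun k => x k * y k).
Definition dist (n : nat) (x y : nat -> R) : R := sqrt (sumn n (fun k => (x k - y k) ^ 2)).
Definition vadd (x y : nat -> R) : nat -> R := fun k => x k + y k.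
Definition vscal (a : R) (x : nat -> R) : nat -> R := fun k => a * x k.
Definition shift (x : nat -> R) (i : nat) (t : R) : nat -> R :=
  fun k => if Nat.eqb k i then x k + t else x k.

Definition perm_on (m : nat) (s : nat -> nat) : Prop :=
  (forall k, (k < m)%nat -> (s k < m)%nat) /\
  (forall k l, (k < m)%nat -> (l < m)%nat -> s k = s l -> k = l) /\
  (forall k, (m <= k)%nat -> s k = k).

Definition closure (m : nat) (G : (nat -> R) -> Prop) (x : nat -> R) : Prop :=
  vec m x /\ forall eps, 0 < eps -> exists y, G y /\ dist m x y < eps.

Definition elliptic_data (m : nat) (f : (nat -> R) -> R) (G : (nat -> R) -> Prop) : Prop :=
  (forall x, G x -> vec m x) /\
  (forall x, G x -> exists eps, 0 < eps /\ forall y, vec m y -> dist m x y < eps -> G y) /\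
  (forall x y t, G x -> G y -> 0 <= t <= 1 -> G (vadd (vscal t x) (vscal (1 - t) y))) /\
  (forall x t, G x -> 0 < t -> G (vscal t x)) /\
  (forall x s, perm_on m s -> G x -> G (fun k => x (s k))) /\
  (* Gamma_m subset Gamma subset Gamma_1 *)
  (forall x, vec m x -> (forall k, (k < m)%nat -> 0 < x k) -> G x) /\
  (forall x, G x -> 0 < sumn m x) /\
  (forall x, closure m G x -> forall eps, 0 < eps -> exists delta, 0 < delta /\
      forall y, closure m G y -> dist m x y < delta -> Rabs (f y - f x) < eps) /\
  (exists Df : nat -> (nat -> R) -> R,
      (forall x i, G x -> (i < m)%nat ->
         derivable_pt_lim (fun t => f (shift x i t)) 0 (Df i x)) /\
      (forall x i, G x -> (i < m)%nat -> forall eps, 0 < eps -> exists delta, 0 < delta /\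
         forall y, G y -> dist m x y < delta -> Rabs (Df i y - Df i x) < eps) /\
      (forall x i, G x -> (i < m)%nat -> 0 < Df i x)) /\
  (forall x s, perm_on m s -> closure m G x -> f (fun k => x (s k)) = f x) /\
  (forall x, closure m G x -> ~ G x -> f x = 0) /\
  (forall x, G x -> 0 < f x) /\
  (forall x t, closure m G x -> 0 < t -> f (vscal t x) = t * f x).

(* rho : R^n -> R (values only read on vectors of R^n) is C^2 with
   alpha-Hoelder second partial derivatives. *)
Definition C2alpha (n : nat) (alpha : R) (rho : (nat -> R) -> R) : Prop :=
  exists (D1 : nat -> (nat -> R) -> R) (D2 : nat -> nat -> (nat -> R) -> R) (C : R),
    (forall x i, vec n x -> (i < n)%nat ->
       derivable_pt_lim (fun t => rho (shift x i t)) 0 (D1 i x)) /\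
    (forall x i j, vec n x -> (i < n)%nat -> (j < n)%nat ->
       derivable_pt_lim (fun t => D1 i (shift x j t)) 0 (D2 i j x)) /\
    (forall x i, vec n x -> (i < n)%nat -> forall eps, 0 < eps -> exists delta, 0 < delta /\
       forall y, vec n y -> dist n x y < delta -> Rabs (D1 i y - D1 i x) < eps) /\
    (forall x y i j, vec n x -> vec n y -> (i < n)%nat -> (j < n)%nat ->
       Rabs (D2 i j x - D2 i j y) <= C * Rpower (dist n x y) alpha).

Definition on_sphere (m : nat) (x : nat -> R) : Prop :=
  vec (S m) x /\ dot (S m) x x = 1.
Definition closed_hemi (m : nat) (x : nat -> R) : Prop := on_sphere m x /\ 0 <= x m.
Definition hemi_boundary (m : nat) (x : nat -> R) : Prop := on_sphere m x /\ x m = 0.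

Definition tangent (m : nat) (x u : nat -> R) : Prop := vec (S m) u /\ dot (S m) x u = 0.
Definition unit_tangent (m : nat) (x u : nat -> R) : Prop := tangent m x u /\ dot (S m) u u = 1.

Definition geo (x u : nat -> R) (t : R) : nat -> R := fun k => cos t * x k + sin t * u k.

Definition sphere_grad (m : nat) (rho : (nat -> R) -> R) (x grad : nat -> R) : Prop :=
  tangent m x grad /\
  forall u, unit_tangent m x u ->
    derivable_pt_lim (fun t => rho (geo x u t)) 0 (dot (S m) grad u).

Definition sphere_hess (m : nat) (rho : (nat -> R) -> R) (x : nat -> R)
    (H : (nat -> R) -> (nat -> R) -> R) : Prop :=
  (forall u v, tangent m x u -> tangent m x v -> H u v = H v u) /\
  (forall a b u v w, tangent m x u -> tangent m x v -> tangent m x w ->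
     H (vadd (vscal a u) (vscal b v)) w = a * H u w + b * H v w) /\
  (forall u, unit_tangent m x u -> exists d1 : R -> R,
     (forall t, derivable_pt_lim (fun s => rho (geo x u s)) t (d1 t)) /\
     derivable_pt_lim d1 0 (H u u)).

(* Schouten tensor of g = e^{2 rho} g0 at x, via the conformal change formula
   Sch(g) = Sch(g0) - Hess rho + d rho (x) d rho - 1/2 |d rho|^2 g0, Sch(g0) = 1/2 g0. *)
Definition schouten (m : nat) (grad : nat -> R) (H : (nat -> R) -> (nat -> R) -> R)
    (u v : nat -> R) : R :=
  / 2 * dot (S m) u v - H u v + dot (S m) grad u * dot (S m) grad v
  - / 2 * dot (S m) grad grad * dot (S m) u v.

(* lam (a vector of R^m) lists the eigenvalues of g^{-1} Sch(g) at x, with multiplicity: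
   there is a basis (e_i)_{i<m} of T_x S^m with Sch(g)(e_i, .) = lam_i g(e_i, .). *)
Definition eigenvalues (m : nat) (rho : (nat -> R) -> R) (x grad : nat -> R)
    (H : (nat -> R) -> (nat -> R) -> R) (lam : nat -> R) : Prop :=
  vec m lam /\
  exists e : nat -> nat -> R,
    (forall i, (i < m)%nat -> tangent m x (e i)) /\
    (forall c : nat -> R, (forall k, sumn m (fun i => c i * e i k) = 0) ->
       forall i, (i < m)%nat -> c i = 0) /\
    (forall i w, (i < m)%nat -> tangent m x w ->
       schouten m grad H (e i) w = lam i * (exp (2 * rho x) * dot (S m) (e i) w)).

(** The argument is a maximum principle.  The closed hemisphere is compact and
  [rho] is continuous, so [rho] attains its maximum at some [x0].  The gradient
  of [rho] vanishes at [x0]: at an interior point this is the first-order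
  condition, and on the boundary [h(g) = c <= 0] says that the gradient points
  weakly into the hemisphere, so the first-order condition along the gradient
  still applies.  Every tangent direction [u] or its opposite points into the
  hemisphere, so the Hessian is nonpositive at [x0], whence
  [Sch(g) >= g0/2 > 0] there.  Thus [lambda(g)] lies in [Gamma_m], where
  [f > 0], contradicting [f(lambda(g)) = 0]. *)

From Pilot Require Import Defs.
From Stdlib Require Import Reals Lra Lia FunctionalExtensionality.
From mathcomp Require all_boot all_order all_algebra all_classical all_reals all_analysis.
From mathcomp Require Rstruct Rstruct_topology.
Set Bullet Behavior "Strict Subproofs".
Open Scope R_scope.

Lemma sumn_ext n F G : (forall k, (k < n)%nat -> F k = G k) -> sumn n F = sumn n G.
Proof.
  induction n as [|n IH]; simpl; intros H; [reflexivity|].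
  rewrite IH by (intros; apply H; lia). rewrite H by lia. reflexivity.
Qed.

Lemma sumn_plus n F G : sumn n (fun k => F k + G k) = sumn n F + sumn n G.
Proof. induction n as [|n IH]; simpl; [|rewrite IH]; ring. Qed.

Lemma sumn_scal n a F : sumn n (fun k => a * F k) = a * sumn n F.
Proof. induction n as [|n IH]; simpl; [|rewrite IH]; ring. Qed.

Lemma sumn_const n c : sumn n (fun _ => c) = INR n * c.
Proof. induction n as [|n IH]; simpl sumn; [simpl; ring|]. rewrite IH, S_INR. ring. Qed.

Lemma sumn_le n F G : (forall k, (k < n)%nat -> F k <= G k) -> sumn n F <= sumn n G.
Proof.
  induction n as [|n IH]; simpl; intros H; [lra|].
  apply Rplus_le_compat; [apply IH; intros|apply H]; auto with arith.
Qed.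

Lemma sumn_nonneg n F : (forall k, (k < n)%nat -> 0 <= F k) -> 0 <= sumn n F.
Proof. intros H. rewrite <- (Rmult_0_r (INR n)), <- sumn_const. now apply sumn_le. Qed.

Lemma sumn_term_le n F k :
  (forall k, (k < n)%nat -> 0 <= F k) -> (k < n)%nat -> F k <= sumn n F.
Proof.
  induction n as [|n IH]; simpl; intros H Hk; [lia|].
  assert (0 <= F n) by (apply H; lia).
  destruct (Nat.eq_dec k n) as [->|Hne].
  - assert (0 <= sumn n F) by (apply sumn_nonneg; intros; apply H; lia). lra.
  - assert (F k <= sumn n F) by (apply IH; [intros; apply H|]; lia). lra.
Qed.

Lemma sumn_delta n i F : (i < n)%nat ->
  sumn n (fun j => (if Nat.eqb j i then 1 else 0) * F j) = F i.
Proof.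
  induction n as [|n IH]; simpl; intros Hi; [lia|].
  destruct (Nat.eq_dec i n) as [->|Hne].
  - rewrite Nat.eqb_refl, (sumn_ext n _ (fun _ => 0)), sumn_const; [ring|].
    intros k Hk. destruct (Nat.eqb_spec k n); [lia|ring].
  - rewrite IH by lia. destruct (Nat.eqb_spec n i); [lia|ring].
Qed.

Lemma dot_sym n x y : dot n x y = dot n y x.
Proof. apply sumn_ext. intros; ring. Qed.

Lemma dot_comb_l n a b x y z :
  dot n (vadd (vscal a x) (vscal b y)) z = a * dot n x z + b * dot n y z.
Proof.
  unfold dot. rewrite <- !sumn_scal, <- sumn_plus.
  apply sumn_ext. intros; unfold vadd, vscal; ring.
Qed.

Lemma dot_comb_r n a b x y z :
  dot n z (vadd (vscal a x) (vscal b y)) = a * dot n z x + b * dot n z y.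
Proof. rewrite dot_sym, dot_comb_l, (dot_sym n x), (dot_sym n y). reflexivity. Qed.

Lemma dot_scal_l n a x y : dot n (vscal a x) y = a * dot n x y.
Proof. unfold dot. rewrite <- sumn_scal. apply sumn_ext. intros; unfold vscal; ring. Qed.

Lemma dot_scal_r n a x y : dot n x (vscal a y) = a * dot n x y.
Proof. rewrite dot_sym, dot_scal_l, dot_sym. reflexivity. Qed.

Lemma dot_self_nonneg n x : 0 <= dot n x x.
Proof. apply sumn_nonneg. intros. nra. Qed.

Lemma sqr_coord_le_dot n x k : (k < n)%nat -> x k * x k <= dot n x x.
Proof. intros Hk. apply (sumn_term_le n (fun k => x k * x k)); auto. intros; nra. Qed.

Lemma dot_self_eq0 n x : dot n x x = 0 -> forall k, (k < n)%nat -> x k = 0.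
Proof. intros H k Hk. pose proof (sqr_coord_le_dot n x k Hk). nra. Qed.

Lemma dot_self_eq0_l n x y : dot n x x = 0 -> dot n x y = 0.
Proof.
  intros H. unfold dot. rewrite (sumn_ext n _ (fun _ => 0)), sumn_const; [ring|].
  intros k Hk. rewrite (dot_self_eq0 n x H k Hk). ring.
Qed.

Lemma unit_coord_bound n x k : dot n x x = 1 -> (k < n)%nat -> -1 <= x k <= 1.
Proof. intros H Hk. pose proof (sqr_coord_le_dot n x k Hk). split; nra. Qed.

Lemma tangent_comb m x a b u v : tangent m x u -> tangent m x v ->
  tangent m x (vadd (vscal a u) (vscal b v)).
Proof.
  intros [Hu Hxu] [Hv Hxv]. split.
  - intros k Hk. unfold vadd, vscal. rewrite Hu, Hv by auto. ring.
  - rewrite dot_comb_r, Hxu, Hxv. ring.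
Qed.

Lemma tangent_scal m x a u : tangent m x u -> tangent m x (vscal a u).
Proof.
  intros [Hu Hxu]. split.
  - intros k Hk. unfold vscal. rewrite Hu by auto. ring.
  - rewrite dot_scal_r, Hxu. ring.
Qed.

Definition normalize n (g : nat -> R) : nat -> R := vscal (/ sqrt (dot n g g)) g.

Lemma dot_normalize n g : 0 < dot n g g -> dot n g (normalize n g) = sqrt (dot n g g).
Proof.
  intros Hg. pose proof (sqrt_lt_R0 _ Hg). unfold normalize.
  rewrite dot_scal_r. rewrite <- (sqrt_sqrt (dot n g g)) at 2 by lra. field. lra.
Qed.

Lemma normalize_unit_tangent m x g : tangent m x g -> 0 < dot (S m) g g ->
  unit_tangent m x (normalize (S m) g).
Proof.
  intros Hg Hpos. pose proof (sqrt_lt_R0 _ Hpos). split; [now apply tangent_scal|].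
  unfold normalize at 1. rewrite dot_scal_l, dot_normalize by auto. field. lra.
Qed.

Lemma sphere_grad_unique m rho x g1 g2 :
  sphere_grad m rho x g1 -> sphere_grad m rho x g2 -> g1 = g2.
Proof.
  intros [Ht1 Hd1] [Ht2 Hd2].
  set (d := vadd (vscal 1 g1) (vscal (-1) g2)).
  assert (Hd0 : dot (S m) d d = 0).
  { destruct (Rle_lt_or_eq_dec 0 _ (dot_self_nonneg (S m) d)) as [Hpos|]; [exfalso|auto].
    assert (Ht : tangent m x d) by now apply tangent_comb.
    pose proof (normalize_unit_tangent m x d Ht Hpos) as Hu.
    assert (E : dot (S m) g1 (normalize (S m) d) = dot (S m) g2 (normalize (S m) d)).
    { apply (uniqueness_limite (fun t => rho (geo x (normalize (S m) d) t)) 0);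
        [apply Hd1|apply Hd2]; exact Hu. }
    pose proof (dot_normalize (S m) d Hpos) as Hn. unfold d at 1 in Hn.
    rewrite dot_comb_l, E in Hn. pose proof (sqrt_lt_R0 _ Hpos). lra. }
  apply functional_extensionality. intros k.
  destruct (Nat.lt_ge_cases k (S m)) as [Hk|Hk].
  - pose proof (dot_self_eq0 _ _ Hd0 k Hk) as Hdk. unfold d, vadd, vscal in Hdk. lra.
  - now rewrite (proj1 Ht1), (proj1 Ht2).
Qed.

Lemma geo_0 x u : geo x u 0 = x.
Proof. apply functional_extensionality. intro k. unfold geo. rewrite cos_0, sin_0. ring. Qed.

Lemma geo_on_sphere m x u t : on_sphere m x -> unit_tangent m x u -> on_sphere m (geo x u t).
Proof.
  intros [Hv Hx] [[Hu Hxu] Huu]. split.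
  - intros k Hk. unfold geo. rewrite Hv, Hu by auto. ring.
  - change (geo x u t) with (vadd (vscal (cos t) x) (vscal (sin t) u)).
    rewrite dot_comb_l, !dot_comb_r, (dot_sym _ u x), Hx, Hxu, Huu.
    pose proof (sin2_cos2 t). unfold Rsqr in *. lra.
Qed.

Lemma geo_stays_in_hemi m x u : closed_hemi m x -> unit_tangent m x u ->
  0 <= u m \/ 0 < x m ->
  exists d, 0 < d /\ forall t, 0 <= t < d -> closed_hemi m (geo x u t).
Proof.
  intros [Hs Hxm] Hu Hin. pose proof PI2_1.
  assert (Hcos : forall t, 0 <= t <= 1 -> 0 <= cos t) by (intros; apply cos_ge_0; lra).
  assert (Hsin : forall t, 0 <= t <= 1 -> 0 <= sin t) by (intros; apply sin_ge_0; lra).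
  destruct Hin as [Hum | Hxm'].
  - exists 1. split; [lra|]. intros t Ht. split; [now apply geo_on_sphere|].
    unfold geo. specialize (Hcos t ltac:(lra)). specialize (Hsin t ltac:(lra)). nra.
  - exists (x m / 2). split; [lra|]. intros t Ht. split; [now apply geo_on_sphere|].
    assert (Hx1 : -1 <= x m <= 1) by (apply (unit_coord_bound (S m)); [apply Hs|lia]).
    assert (Hu1 : -1 <= u m <= 1) by (apply (unit_coord_bound (S m)); [apply Hu|lia]).
    specialize (Hcos t ltac:(lra)). specialize (Hsin t ltac:(lra)).
    assert (sin t <= t).
    { destruct (Req_dec t 0) as [->|]; [rewrite sin_0; lra|left; apply sin_lt_x; lra]. }
    pose proof (sin2_cos2 t). pose proof (COS_bound t). unfold Rsqr in *.
    (* [cos t >= cos t ^ 2 = 1 - sin t ^ 2 >= 3/4] *)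
    unfold geo. nra.
Qed.

Lemma hess_scal_l m rho x H a u w : sphere_hess m rho x H -> tangent m x u -> tangent m x w ->
  H (vscal a u) w = a * H u w.
Proof.
  intros [_ [Hlin _]] Hu Hw.
  replace (vscal a u) with (vadd (vscal a u) (vscal 0 u))
    by (apply functional_extensionality; intro k; unfold vadd, vscal; ring).
  rewrite Hlin by auto. ring.
Qed.

Lemma hess_scal m rho x H a u : sphere_hess m rho x H -> tangent m x u ->
  H (vscal a u) (vscal a u) = a * a * H u u.
Proof.
  intros HH Hu. pose proof (tangent_scal m x a u Hu) as Hau. pose proof HH as [Hsym _].
  rewrite (hess_scal_l m rho x H a u), Hsym, (hess_scal_l m rho x H a u) by auto. ring.
Qed.

(** * Extremum tests at the left end of an interval *)

Lemma deriv_nonpos_at_left_max F l d : derivable_pt_lim F 0 l -> 0 < d ->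
  (forall t, 0 <= t < d -> F t <= F 0) -> l <= 0.
Proof.
  intros HF Hd Hmax. apply Rnot_lt_le. intros Hl.
  destruct (HF (l / 2)) as [del Hdel]; [lra|].
  set (h := Rmin del d / 2).
  assert (Hp : 0 < Rmin del d) by (apply Rmin_pos; [apply cond_pos|lra]).
  pose proof (Rmin_l del d). pose proof (Rmin_r del d).
  specialize (Hdel h ltac:(unfold h; lra) ltac:(rewrite Rabs_right; unfold h; lra)).
  specialize (Hmax h ltac:(unfold h; lra)).
  rewrite Rplus_0_l in Hdel. apply Rabs_def2 in Hdel.
  assert ((F h - F 0) / h <= 0).
  { unfold Rdiv. assert (0 < / h) by (apply Rinv_0_lt_compat; unfold h; lra). nra. }
  lra.
Qed.

Lemma deriv2_nonpos_at_left_max F d1 l d :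
  (forall t, derivable_pt_lim F t (d1 t)) -> d1 0 = 0 -> derivable_pt_lim d1 0 l ->
  0 < d -> (forall t, 0 <= t < d -> F t <= F 0) -> l <= 0.
Proof.
  intros HF H0 Hd1 Hd Hmax. apply Rnot_lt_le. intros Hl.
  destruct (Hd1 (l / 2)) as [del Hdel]; [lra|].
  (* [d1 > 0] on [(0, del)], so [F] increases there. *)
  assert (Hpos : forall s, 0 < s < del -> 0 < d1 s).
  { intros s Hs. specialize (Hdel s ltac:(lra) ltac:(rewrite Rabs_right; lra)).
    rewrite Rplus_0_l, H0, Rminus_0_r in Hdel. apply Rabs_def2 in Hdel.
    replace (d1 s) with (d1 s / s * s) by (field; lra). apply Rmult_lt_0_compat; lra. }
  set (t := Rmin del d / 2).
  assert (Hp : 0 < Rmin del d) by (apply Rmin_pos; [apply cond_pos|lra]).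
  pose proof (Rmin_l del d). pose proof (Rmin_r del d).
  destruct (MVT_cor2 F d1 0 t ltac:(unfold t; lra) (fun c _ => HF c)) as [c [Hc1 Hc2]].
  assert (0 < d1 c) by (apply Hpos; unfold t in *; lra).
  specialize (Hmax t ltac:(unfold t; lra)).
  assert (0 < d1 c * (t - 0)) by (apply Rmult_lt_0_compat; unfold t in *; lra).
  lra.
Qed.

(** * Continuity of functions with continuous partial derivatives *)

Definition vec_continuous_at n (F : (nat -> R) -> R) (x : nat -> R) : Prop :=
  forall eps, 0 < eps -> exists delta, 0 < delta /\
    forall y, vec n y -> (forall k, (k < n)%nat -> Rabs (y k - x k) < delta) ->
    Rabs (F y - F x) < eps.

Lemma dist_le_coord n x w d : 0 <= d ->
  (forall k, (k < n)%nat -> Rabs (w k - x k) <= d) -> Defs.dist n x w <= (INR n + 1) * d.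
Proof.
  intros Hd H. pose proof (pos_INR n). unfold Defs.dist.
  rewrite <- (sqrt_pow2 ((INR n + 1) * d)) by nra. apply sqrt_le_1_alt.
  apply Rle_trans with (sumn n (fun _ => d ^ 2)).
  - apply sumn_le. intros k Hk.
    replace ((x k - w k) ^ 2) with ((w k - x k) ^ 2) by ring. now apply pow_maj_Rabs, H.
  - rewrite sumn_const. nra.
Qed.

Lemma locally_bounded_family n (D : nat -> (nat -> R) -> R) x j :
  (forall i, (i < j)%nat -> forall eps, 0 < eps -> exists delta, 0 < delta /\
     forall y, vec n y -> Defs.dist n x y < delta -> Rabs (D i y - D i x) < eps) ->
  exists d0 M, 0 < d0 /\ 0 <= M /\
    forall i w, (i < j)%nat -> vec n w -> Defs.dist n x w < d0 -> Rabs (D i w) <= M.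
Proof.
  induction j as [|j IH]; intros Hcont.
  - exists 1, 0. split; [lra|]. split; [lra|]. intros; lia.
  - destruct IH as [d0 [M [Hd0 [HM Hbound]]]]; [intros i Hi; apply Hcont; lia|].
    destruct (Hcont j ltac:(lia) 1 ltac:(lra)) as [dj [Hdj Hj]].
    exists (Rmin d0 dj), (Rmax M (Rabs (D j x) + 1)).
    pose proof (Rmin_l d0 dj). pose proof (Rmin_r d0 dj).
    pose proof (Rmax_l M (Rabs (D j x) + 1)). pose proof (Rmax_r M (Rabs (D j x) + 1)).
    split; [now apply Rmin_pos|]. split; [lra|].
    intros i w Hi Hw Hd. destruct (Nat.eq_dec i j) as [->|Hne].
    + specialize (Hj w Hw ltac:(lra)). pose proof (Rabs_triang_inv (D j w) (D j x)). lra.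
    + specialize (Hbound i w ltac:(lia) Hw ltac:(lra)). lra.
Qed.

Lemma derivable_pt_lim_shift_origin G t l :
  derivable_pt_lim (fun s => G (t + s)) 0 l -> derivable_pt_lim G t l.
Proof.
  intros H eps Heps. destruct (H eps Heps) as [del Hdel]. exists del.
  intros h Hh Hhd. specialize (Hdel h Hh Hhd). now rewrite Rplus_0_l, Rplus_0_r in Hdel.
Qed.

Lemma shift_shift z i t s : shift (shift z i t) i s = shift z i (t + s).
Proof.
  apply functional_extensionality; intro k. unfold shift. destruct (Nat.eqb k i); ring.
Qed.

Lemma shift_0 z i : shift z i 0 = z.
Proof.
  apply functional_extensionality; intro k. unfold shift. destruct (Nat.eqb k i); ring.
Qed.

Lemma vec_shift n z i t : vec n z -> (i < n)%nat -> vec n (shift z i t).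
Proof. intros Hz Hi k Hk. unfold shift. destruct (Nat.eqb_spec k i); [lia|auto]. Qed.

Section PartialDerivatives.

Variables (n : nat) (F : (nat -> R) -> R) (D : nat -> (nat -> R) -> R).
Hypothesis F_partial : forall x i, vec n x -> (i < n)%nat ->
  derivable_pt_lim (fun t => F (shift x i t)) 0 (D i x).

Lemma partial_increment_bound z j d M : vec n z -> (j < n)%nat ->
  (forall t, Rabs t <= Rabs d -> Rabs (D j (shift z j t)) <= M) ->
  Rabs (F (shift z j d) - F z) <= M * Rabs d.
Proof.
  intros Hz Hj HM.
  destruct (MVT_abs (fun t => F (shift z j t)) (fun t => D j (shift z j t)) 0 d)
    as [c [Hc Hcd]].
  { intros c _. apply derivable_pt_lim_shift_origin.
    replace (fun s => F (shift z j (c + s))) with (fun s => F (shift (shift z j c) j s))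
      by (apply functional_extensionality; intro s; now rewrite shift_shift).
    apply F_partial; [now apply vec_shift|exact Hj]. }
  rewrite shift_0, Rminus_0_r in Hc. rewrite Hc.
  apply Rmult_le_compat_r; [apply Rabs_pos|]. apply HM.
  unfold Rmin, Rmax in Hcd. destruct (Rle_dec 0 d).
  - rewrite !Rabs_right by lra. lra.
  - rewrite !Rabs_left1 by lra. lra.
Qed.

(* Change the coordinates of [x] into those of [y] one at a time. *)
Lemma increment_bound_near x M d0 r : vec n x -> 0 <= M -> 0 <= r ->
  (INR n + 1) * r < d0 ->
  (forall i w, (i < n)%nat -> vec n w -> Defs.dist n x w < d0 -> Rabs (D i w) <= M) ->
  forall y, vec n y -> (forall k, (k < n)%nat -> Rabs (y k - x k) <= r) ->
  Rabs (F y - F x) <= INR n * M * r.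
Proof.
  intros Hx HM Hr Hrd Hbound.
  assert (Hind : forall j, (j <= n)%nat -> forall y, vec n y ->
            (forall k, (k < n)%nat -> Rabs (y k - x k) <= r) ->
            (forall k, (j <= k)%nat -> y k = x k) ->
            Rabs (F y - F x) <= INR j * M * r).
  { induction j as [|j IH]; intros Hj y Hy Hyr Hyx.
    - replace y with x by (apply functional_extensionality; intro k; symmetry; apply Hyx; lia).
      rewrite Rminus_diag, Rabs_R0. simpl. lra.
    - set (y' := shift y j (x j - y j)).
      assert (Hy' : vec n y') by (apply vec_shift; auto; lia).
      assert (Hy'r : forall k, (k < n)%nat -> Rabs (y' k - x k) <= r).
      { intros k Hk. unfold y', shift. destruct (Nat.eqb_spec k j) as [->|].
        - replace (y j + (x j - y j) - x j) with 0 by ring. rewrite Rabs_R0. exact Hr.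
        - now apply Hyr. }
      assert (Hprev : Rabs (F y' - F x) <= INR j * M * r).
      { apply IH; [lia|exact Hy'|exact Hy'r|].
        intros k Hk. unfold y', shift. destruct (Nat.eqb_spec k j) as [->|]; [ring|].
        apply Hyx. lia. }
      assert (Ey : y = shift y' j (y j - x j)).
      { apply functional_extensionality; intro k. unfold y', shift.
        destruct (Nat.eqb_spec k j) as [->|]; ring. }
      assert (Hstep : Rabs (F y - F y') <= M * r).
      { rewrite Ey at 1. apply Rle_trans with (M * Rabs (y j - x j)).
        - apply partial_increment_bound; [exact Hy'|lia|]. intros t Ht.
          apply Hbound; [lia|now apply vec_shift; [|lia]|].
          apply Rle_lt_trans with ((INR n + 1) * r); [|exact Hrd].
          apply dist_le_coord; [exact Hr|]. intros k Hk. unfold shift.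
          destruct (Nat.eqb_spec k j) as [->|]; [|now apply Hy'r].
          replace (y' j + t - x j) with t by (unfold y', shift; rewrite Nat.eqb_refl; ring).
          pose proof (Hyr j ltac:(lia)). lra.
        - apply Rmult_le_compat_l; [exact HM|]. apply Hyr. lia. }
      pose proof (Rabs_triang (F y - F y') (F y' - F x)).
      replace (F y - F y' + (F y' - F x)) with (F y - F x) in * by ring.
      rewrite S_INR. lra. }
  intros y Hy Hyr. apply Hind; auto. intros k Hk. now rewrite Hx, Hy.
Qed.

Lemma vec_continuous_of_partials x : vec n x ->
  (forall i, (i < n)%nat -> forall eps, 0 < eps -> exists delta, 0 < delta /\
     forall y, vec n y -> Defs.dist n x y < delta -> Rabs (D i y - D i x) < eps) ->
  vec_continuous_at n F x.
Proof.
  intros Hx Hcont eps Heps.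
  destruct (locally_bounded_family n D x n Hcont) as [d0 [M [Hd0 [HM Hbound]]]].
  pose proof (pos_INR n).
  set (r := Rmin (d0 / (2 * (INR n + 1))) (eps / ((INR n + 1) * (M + 1)))).
  assert (Hr : 0 < r) by (apply Rmin_pos; apply Rdiv_lt_0_compat; nra).
  assert (Hr1 : r <= d0 / (2 * (INR n + 1))) by apply Rmin_l.
  assert (Hr2 : r <= eps / ((INR n + 1) * (M + 1))) by apply Rmin_r.
  assert (Hrd : (INR n + 1) * r < d0).
  { apply Rle_lt_trans with (d0 / 2); [|lra].
    replace (d0 / 2) with ((INR n + 1) * (d0 / (2 * (INR n + 1)))) by (field; lra).
    apply Rmult_le_compat_l; lra. }
  assert (Hre : INR n * M * r < eps).
  { apply Rlt_le_trans with ((INR n + 1) * (M + 1) * r); [nra|].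
    replace eps with ((INR n + 1) * (M + 1) * (eps / ((INR n + 1) * (M + 1))))
      by (field; nra).
    apply Rmult_le_compat_l; nra. }
  exists r. split; [exact Hr|]. intros y Hy Hyx.
  eapply Rle_lt_trans; [|exact Hre].
  apply (increment_bound_near x M d0 r Hx HM (Rlt_le _ _ Hr) Hrd Hbound y Hy).
  intros k Hk. now apply Rlt_le, Hyx.
Qed.

End PartialDerivatives.

Lemma C2alpha_vec_continuous n alpha rho : C2alpha n alpha rho ->
  forall x, vec n x -> vec_continuous_at n rho x.
Proof.
  intros [D1 [D2 [C [Hd1 [_ [Hcont _]]]]]] x Hx.
  apply (vec_continuous_of_partials n rho D1 Hd1 x Hx). intros i Hi. now apply Hcont.
Qed.

(** * Compactness of the closed hemisphere *)

Definition north_pole m : nat -> R := fun k => if Nat.eqb k m then 1 else 0.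

Lemma closed_hemi_north_pole m : closed_hemi m (north_pole m).
Proof.
  unfold north_pole. split; [split|].
  - intros k Hk. destruct (Nat.eqb_spec k m); [lia|reflexivity].
  - unfold dot. rewrite (sumn_delta (S m) m (fun k => if Nat.eqb k m then 1 else 0)) by lia.
    now rewrite Nat.eqb_refl.
  - rewrite Nat.eqb_refl. lra.
Qed.

Module HemisphereCompactness.
Import mathcomp.boot.all_boot mathcomp.order.all_order mathcomp.algebra.all_algebra.
Import mathcomp.classical.all_classical mathcomp.reals.all_reals mathcomp.analysis.all_analysis.
Import mathcomp.reals_stdlib.Rstruct mathcomp.analysis_stdlib.Rstruct_topology.
Import Order.TTheory GRing.Theory Num.Theory numFieldNormedType.Exports.
Local Open Scope classical_set_scope.
Local Open Scope R_scope.

Definition vec_of_row m (v : 'rV[R]_m.+1) : nat -> R :=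
  fun k => if (k < m.+1)%N then v ord0 (inord k) else 0%R.

Lemma vec_of_row_vec m v : vec (S m) (vec_of_row m v).
Proof. move=> k Hk; rewrite /vec_of_row; case: ifP => // /ssrnat.ltP; lia. Qed.

Lemma vec_of_row_row m (y : nat -> R) : vec (S m) y -> vec_of_row m (\row_(i < m.+1) y i) = y.
Proof.
  move=> Hy. apply: functional_extensionality => k. rewrite /vec_of_row.
  case: ltnP => Hk; first by rewrite mxE inordK.
  by rewrite Hy //; apply/ssrnat.leP.
Qed.

Lemma coord_vec_of_row_continuous m k : continuous (fun v : 'rV[R]_m.+1 => vec_of_row m v k).
Proof.
  rewrite /vec_of_row; case: (k < m.+1)%N; [exact: coord_continuous|exact: cst_continuous].
Qed.

Lemma sumn_continuous m n (F : nat -> 'rV[R]_m.+1 -> R) :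
  (forall k, continuous (F k)) -> continuous (fun v => Defs.sumn n (fun k => F k v)).
Proof.
  move=> HF; elim: n => [|n IH] /=; first exact: cst_continuous.
  move=> v. exact: (@continuousD R R^o _ _ _ v (IH v) (HF n v)).
Qed.

Lemma continuous_of_vec_continuous m (rho : (nat -> R) -> R) :
  (forall x, vec (S m) x -> vec_continuous_at (S m) rho x) ->
  continuous (fun v => rho (vec_of_row m v)).
Proof.
  move=> Hc v; apply/(@cvgrPdist_lt R R^o _ (nbhs v) (nbhs_filter v)) => e /RltP e0.
  have [d [d0 Hd]] := Hc (vec_of_row m v) (vec_of_row_vec m v) e e0.
  have Hnear : nbhs v (fun w : 'rV[R]_m.+1 =>
                 forall i : 'I_m.+1, Rabs (w ord0 i - v ord0 i) < d).
  { apply/nbhs_ballP; exists d; first by apply/RltP.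
    move=> w [_ /(_ ord0) Hw] i. by move/RltP: (Hw i); rewrite distrC. }
  apply: filterS Hnear => w Hw. rewrite distrC. apply/RltP.
  apply: Hd; first exact: vec_of_row_vec.
  move=> k /ssrnat.ltP Hk. rewrite /vec_of_row Hk. exact: Hw.
Qed.

Lemma closed_hemi_attains_max m (rho : (nat -> R) -> R) :
  (forall x, vec (S m) x -> vec_continuous_at (S m) rho x) ->
  exists x0, closed_hemi m x0 /\ forall y, closed_hemi m y -> rho y <= rho x0.
Proof.
  move=> Hc.
  pose A := [set v : 'rV[R]_m.+1 | closed_hemi m (vec_of_row m v)].
  have Aeq : A = (fun v => dot (S m) (vec_of_row m v) (vec_of_row m v)) @^-1` [set 1%R] `&`
                 (fun v => vec_of_row m v m) @^-1` [set x | (0 <= x)%R].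
  { apply/seteqP; split => v /=.
    - by move=> [[_ H1] /RleP H2].
    - by move=> [H1 /RleP H2]; split => //; split => //; exact: vec_of_row_vec. }
  have Acl : closed A.
  { rewrite Aeq; apply: closedI.
    - apply: preimage_closed; last exact: closed_eq.
      move=> v _; apply: sumn_continuous => k w.
      exact: (@continuousM R _ _ _ w (coord_vec_of_row_continuous m k w)
                (coord_vec_of_row_continuous m k w)).
    - apply: preimage_closed; last exact: closed_ge.
      move=> v _; exact: coord_vec_of_row_continuous. }
  have Acpt : compact A.
  { have Kcube := @rV_compact R m.+1 (fun _ : 'I_m.+1 => `[(-1)%R, 1%R]%classic)
                   (fun _ => @segment_compact R (-1)%R 1%R).
    apply: (subclosed_compact Acl Kcube).
    move=> v [[_ Hd] _] i /=.
    have [H1 H2] := unit_coord_bound (S m) (vec_of_row m v) i Hd (ssrnat.ltP (ltn_ord i)).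
    move: H1 H2; rewrite /vec_of_row ltn_ord inord_val => H1 H2.
    by rewrite in_itv /=; apply/andP; split; apply/RleP. }
  have A0 : A !=set0.
  { exists (\row_(i < m.+1) north_pole m i)%R.
    have Hp := closed_hemi_north_pole m.
    by rewrite /A /= vec_of_row_row //; exact: (proj1 (proj1 Hp)). }
  have Fc : {within A, continuous (fun v => rho (vec_of_row m v))}
    by exact/continuous_subspaceT/continuous_of_vec_continuous.
  have [c cA cmax] := EVT_max_rV A0 Acpt Fc.
  exists (vec_of_row m c); split; first by move: cA; rewrite inE.
  move=> y Hy; have Hyv := proj1 (proj1 Hy).
  rewrite -(vec_of_row_row m y Hyv); apply/RleP; apply: cmax.
  by rewrite inE /A /= vec_of_row_row.
Qed.

End HemisphereCompactness.

Lemma schouten_pos_at_critical m grad H v : (forall w, dot (S m) grad w = 0) ->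
  H v v <= 0 -> 0 < dot (S m) v v -> 0 < schouten m grad H v v.
Proof. intros Hg0 HH Hv. unfold schouten. rewrite !Hg0. lra. Qed.

Lemma independent_nonzero n m e i :
  (forall i, (i < m)%nat -> vec n (e i)) ->
  (forall c : nat -> R, (forall k, sumn m (fun i => c i * e i k) = 0) ->
     forall i, (i < m)%nat -> c i = 0) ->
  (i < m)%nat -> 0 < dot n (e i) (e i).
Proof.
  intros Hvec Hind Hi.
  destruct (Rle_lt_or_eq_dec 0 _ (dot_self_nonneg n (e i))) as [|Hzero]; [auto|exfalso].
  set (c := fun j => if Nat.eqb j i then 1 else 0).
  assert (Hc : forall k, sumn m (fun j => c j * e j k) = 0).
  { intro k. unfold c. rewrite (sumn_delta m i (fun j => e j k) Hi).
    destruct (Nat.lt_ge_cases k n).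
    - now apply (dot_self_eq0 n).
    - now apply Hvec. }
  specialize (Hind c Hc i Hi). unfold c in Hind. rewrite Nat.eqb_refl in Hind. lra.
Qed.

Lemma eigenvalues_pos_of_schouten_pos m rho x grad H lam :
  eigenvalues m rho x grad H lam ->
  (forall v, tangent m x v -> 0 < dot (S m) v v -> 0 < schouten m grad H v v) ->
  forall i, (i < m)%nat -> 0 < lam i.
Proof.
  intros [_ [e [Het [Hind Heig]]]] Hpos i Hi.
  pose proof (independent_nonzero (S m) m e i (fun j Hj => proj1 (Het j Hj)) Hind Hi) as Hne.
  pose proof (Hpos (e i) (Het i Hi) Hne) as Hs.
  rewrite (Heig i (e i) Hi (Het i Hi)) in Hs.
  pose proof (exp_pos (2 * rho x)).
  apply Rnot_le_lt. intros Hl.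
  assert (0 < exp (2 * rho x) * dot (S m) (e i) (e i)) by (apply Rmult_lt_0_compat; lra).
  nra.
Qed.

(** * The maximum point *)

Section AtMaximum.

Variables (m : nat) (rho : (nat -> R) -> R) (x0 : nat -> R).
Hypothesis x0_hemi : closed_hemi m x0.
Hypothesis x0_max : forall y, closed_hemi m y -> rho y <= rho x0.

Lemma grad_dir_nonpos_at_max grad u : sphere_grad m rho x0 grad -> unit_tangent m x0 u ->
  0 <= u m \/ 0 < x0 m -> dot (S m) grad u <= 0.
Proof.
  intros [_ Hgrad] Hu Hin.
  destruct (geo_stays_in_hemi m x0 u x0_hemi Hu Hin) as [d [Hd Hstay]].
  apply (deriv_nonpos_at_left_max _ _ d (Hgrad u Hu) Hd).
  intros t Ht. rewrite geo_0. apply x0_max, Hstay, Ht.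
Qed.

Lemma grad_null_at_max grad : sphere_grad m rho x0 grad ->
  0 <= grad m \/ 0 < x0 m -> dot (S m) grad grad = 0.
Proof.
  intros Hg Hin. pose proof Hg as [Ht _].
  destruct (Rle_lt_or_eq_dec 0 _ (dot_self_nonneg (S m) grad)) as [Hpos|]; [exfalso|auto].
  pose proof (sqrt_lt_R0 _ Hpos).
  assert (Hin' : 0 <= normalize (S m) grad m \/ 0 < x0 m).
  { destruct Hin as [Hgm|]; [left|now right].
    apply Rmult_le_pos; [left; now apply Rinv_0_lt_compat|exact Hgm]. }
  pose proof (grad_dir_nonpos_at_max grad _ Hg (normalize_unit_tangent m x0 grad Ht Hpos) Hin').
  rewrite dot_normalize in * by exact Hpos. lra.
Qed.

Lemma hess_dir_nonpos_at_max grad H u : sphere_grad m rho x0 grad ->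
  (forall v, dot (S m) grad v = 0) -> sphere_hess m rho x0 H -> unit_tangent m x0 u ->
  0 <= u m \/ 0 < x0 m -> H u u <= 0.
Proof.
  intros [_ Hgrad] Hg0 [_ [_ Hsecond]] Hu Hin.
  destruct (Hsecond u Hu) as [d1 [Hd1 Hd1']].
  assert (E0 : d1 0 = 0).
  { rewrite <- (Hg0 u) at 2. apply (uniqueness_limite (fun s => rho (geo x0 u s)) 0); auto. }
  destruct (geo_stays_in_hemi m x0 u x0_hemi Hu Hin) as [d [Hd Hstay]].
  apply (deriv2_nonpos_at_left_max _ d1 _ d Hd1 E0 Hd1' Hd).
  intros t Ht. rewrite geo_0. apply x0_max, Hstay, Ht.
Qed.

(* One of [u] and [-u] points into the hemisphere, and [H] is even. *)
Lemma hess_nonpos_at_max grad H v : sphere_grad m rho x0 grad ->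
  (forall w, dot (S m) grad w = 0) -> sphere_hess m rho x0 H ->
  tangent m x0 v -> 0 < dot (S m) v v -> H v v <= 0.
Proof.
  intros Hg Hg0 HH Hv Hpos. pose proof (sqrt_lt_R0 _ Hpos).
  set (N := dot (S m) v v) in *.
  pose proof (normalize_unit_tangent m x0 v Hv Hpos) as Hu. set (u := normalize (S m) v) in *.
  assert (Huu : H u u <= 0).
  { destruct (Rle_or_lt 0 (u m)) as [Hum|Hum].
    - exact (hess_dir_nonpos_at_max grad H u Hg Hg0 HH Hu (or_introl Hum)).
    - assert (Hu' : unit_tangent m x0 (vscal (-1) u)).
      { destruct Hu as [Hut Hu1]. split; [now apply tangent_scal|].
        rewrite dot_scal_l, dot_scal_r, Hu1. ring. }
      assert (Hum' : 0 <= vscal (-1) u m) by (unfold vscal; lra).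
      pose proof (hess_dir_nonpos_at_max grad H _ Hg Hg0 HH Hu' (or_introl Hum')) as Hneg.
      rewrite (hess_scal m rho x0 H) in Hneg by (exact HH || apply Hu). lra. }
  replace v with (vscal (sqrt N) u)
    by (apply functional_extensionality; intro k; unfold u, normalize, vscal; fold N; field; lra).
  rewrite (hess_scal m rho x0 H), sqrt_sqrt by (exact HH || apply Hu || lra). nra.
Qed.

End AtMaximum.

Theorem mainTheorem10 (m : nat) (Hm : (3 <= m)%nat)
    (f : (nat -> R) -> R) (Gam : (nat -> R) -> Prop) (Hell : elliptic_data m f Gam)
    (c : R) (Hc : c <= 0) (alpha : R) (Halpha : 0 < alpha < 1) :
  ~ exists rho : (nat -> R) -> R,
      C2alpha (S m) alpha rho /\
      (forall x, closed_hemi m x ->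
         exists grad H lam,
           sphere_grad m rho x grad /\ sphere_hess m rho x H /\
           eigenvalues m rho x grad H lam /\ closure m Gam lam /\ f lam = 0) /\
      (forall x, hemi_boundary m x ->
         exists grad, sphere_grad m rho x grad /\ - exp (- rho x) * grad m = c).
Proof.
  intros [rho [Hreg [Hint Hbd]]].
  destruct Hell as [_ [_ [_ [_ [_ [HGm [_ [_ [_ [_ [_ [Hfpos _]]]]]]]]]]]].
  destruct (HemisphereCompactness.closed_hemi_attains_max m rho
              (C2alpha_vec_continuous (S m) alpha rho Hreg)) as [x0 [Hx0 Hmax]].
  destruct (Hint x0 Hx0) as [grad [H [lam [Hg [Hh [Heig [_ Hf0]]]]]]].
  assert (Hin : 0 <= grad m \/ 0 < x0 m).
  { destruct (Rlt_or_le 0 (x0 m)) as [|Hb]; [now right|left].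
    assert (Hx0b : hemi_boundary m x0) by (destruct Hx0; split; [|lra]; assumption).
    destruct (Hbd x0 Hx0b) as [g' [Hg' Hc']].
    rewrite (sphere_grad_unique m rho x0 grad g' Hg Hg').
    pose proof (exp_pos (- rho x0)). nra. }
  assert (Hg0 : forall v, dot (S m) grad v = 0)
    by (intro; now apply dot_self_eq0_l, (grad_null_at_max m rho x0)).
  assert (Hlam : forall i, (i < m)%nat -> 0 < lam i).
  { apply (eigenvalues_pos_of_schouten_pos m rho x0 grad H lam Heig).
    intros v Hv Hvv. apply schouten_pos_at_critical; [exact Hg0| |exact Hvv].
    now apply (hess_nonpos_at_max m rho x0 Hx0 Hmax grad). }
  pose proof (Hfpos lam (HGm lam (proj1 Heig) Hlam)). lra.
Qed.
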